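(* Consider TOTATIVE. The nim-value of $n>1$ is the index of the smallest prime divisor of $n$, and $\mathcal{SG}(1)=0$.
   Context: TOTATIVE is the impartial normal-play game on the positive integers where from $n$ a player moves to a smaller relatively prime residue, i.e. to any $k$ with $1\le k<n$ and $\gcd(k,n)=1$; the player unable to move loses. $\mathcal{SG}$ (nim-value) denotes the Sprague-Grundy value (mex rule). Primes are indexed with $2$ having index $1$, $3$ index $2$, etc. *)

From mathcomp Require Import all_boot.
Set Implicit Arguments. Unset Strict Implicit. Unset Printing Implicit Defensive.

Definition mex (s : seq nat) : nat :=
  let fix go (fuel m : nat) := if fuel is f.+1 then (if m \in s then go f m.+1 else m) else m
  in go (size s).+1 0.

(* sg_table m = [:: SG 1; SG 2; ...; SG m] for TOTATIVE, built by the mex rule: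
   SG n = mex { SG k | 1 <= k < n, gcd k n = 1 }. *)
Fixpoint sg_table (m : nat) : seq nat :=
  if m is m'.+1 then
    let t := sg_table m' in
    rcons t (mex [seq nth 0 t k.-1 | k <- iota 1 m' & coprime k m])
  else [::].

Definition SG (n : nat) : nat := nth 0 (sg_table n) n.-1.

(* index of a prime p: 2 has index 1, 3 has index 2, ... *)
Definition prime_index (p : nat) : nat := count prime (iota 0 p.+1).

From mathcomp Require Import all_boot zify.

Set Implicit Arguments.
Unset Strict Implicit.
Unset Printing Implicit Defensive.

(* The options of n are 1, of value 0, and the
   k < n coprime to n, of value prime_index (pdiv k) by induction.  Every prime
   q < pdiv n is such an option, so all values below prime_index (pdiv n) occur;
   an option k > 1 cannot have pdiv k = pdiv n, as pdiv n would divide gcd k n,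
   so prime_index (pdiv n) does not occur and is the mex. *)

Section Mex.

Variable s : seq nat.

(* The local fixpoint of [mex], named so that one can induct on its fuel. *)
Fixpoint mex_from (fuel m : nat) : nat :=
  if fuel is f.+1 then (if m \in s then mex_from f m.+1 else m) else m.

Lemma mexE : mex s = mex_from (size s).+1 0.
Proof. by []. Qed.

Lemma mex_eq v : (forall i, i < v -> i \in s) -> v \notin s -> mex s = v.
Proof.
move=> lt_v_in v_notin.
(* 0, ..., v - 1 are distinct elements of s, so the fuel suffices. *)
have v_small : v - 0 < (size s).+1.
  rewrite subn0 ltnS -(size_iota 0 v); apply: uniq_leq_size; first exact: iota_uniq.
  by move=> i; rewrite mem_iota => /andP[_]; apply: lt_v_in.
rewrite mexE; elim: (size s).+1 0 (leq0n v) v_small => // fuel IH m le_mv lt_fuel /=.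
have [lt_mv | ge_mv] := ltnP m v; first by rewrite lt_v_in // IH //; lia.
have -> : m = v by lia.
by rewrite (negbTE v_notin).
Qed.

End Mex.

Definition moves (n : nat) : seq nat := [seq k <- iota 1 n.-1 | coprime k n].

Lemma mem_moves n k : (k \in moves n) = [&& 0 < k, k < n & coprime k n].
Proof.
rewrite mem_filter mem_iota andbC -andbA add1n.
by case: n => [|n] //; case: k => [|[]].
Qed.

Lemma size_sg_table m : size (sg_table m) = m.
Proof. by elim: m => //= m IH; rewrite size_rcons IH. Qed.

Lemma nth_sg_table m k : k < m -> nth 0 (sg_table m) k = SG k.+1.
Proof.
rewrite /SG /=; elim: m => // m IH lt_km.
rewrite [sg_table m.+1]/= nth_rcons size_sg_table.
have [lt_k_m | ge_k_m] := ltnP k m; first exact: IH.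
have -> : k = m by lia.
by rewrite eqxx nth_rcons size_sg_table ltnn eqxx.
Qed.

Lemma SG_mex n : 0 < n -> SG n = mex [seq SG k | k <- moves n].
Proof.
case: n => // n _; rewrite {1}/SG /= nth_rcons size_sg_table ltnn eqxx.
congr mex; apply/eq_in_map => k; rewrite mem_moves => /and3P[k_gt0 lt_kn _].
by rewrite nth_sg_table ?prednK //; lia.
Qed.

Lemma prime_indexS m : prime_index m.+1 = prime_index m + prime m.+1.
Proof. by rewrite /prime_index -addn1 iotaD count_cat /= addn0. Qed.

Lemma leq_prime_index : {homo prime_index : a b / a <= b}.
Proof. by apply: homo_leq leqnn leq_trans _ => m; rewrite prime_indexS leq_addr. Qed.

Lemma prime_index_ltn q p : q < p -> prime p -> prime_index q < prime_index p.
Proof.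
case: p => // p lt_qp p_pr; rewrite prime_indexS p_pr addn1 ltnS.
exact: leq_prime_index.
Qed.

Lemma prime_index_gt0 p : prime p -> 0 < prime_index p.
Proof. by move=> p_pr; apply: prime_index_ltn (prime_gt0 p_pr) p_pr. Qed.

Lemma prime_index_inj p q :
  prime p -> prime q -> prime_index p = prime_index q -> p = q.
Proof.
move=> p_pr q_pr eq_idx; case: (ltngtP p q) => [lt_pq | lt_qp | //].
  by have := prime_index_ltn lt_pq q_pr; rewrite eq_idx ltnn.
by have := prime_index_ltn lt_qp p_pr; rewrite eq_idx ltnn.
Qed.

Lemma prime_of_index m j : 0 < j -> j <= prime_index m ->
  exists q, [/\ prime q, q <= m & prime_index q = j].
Proof.
move=> j_gt0; elim: m => [|m IH]; first by rewrite /prime_index /=; lia.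
rewrite prime_indexS; have [le_j_m _ | gt_j_m] := leqP j (prime_index m).
  have [q [q_pr le_qm <-]] := IH le_j_m.
  by exists q; split => //; exact: leqW.
case m1_pr: (prime m.+1) => /= le_j_m1; last lia.
by exists m.+1; rewrite prime_indexS m1_pr; split => //; lia.
Qed.

Lemma prime_below_of_index p j : prime p -> 0 < j -> j < prime_index p ->
  exists q, [/\ prime q, q < p & prime_index q = j].
Proof.
case: p => // p p_pr j_gt0; rewrite prime_indexS p_pr addn1 ltnS => le_jp.
by have [q [q_pr le_qp <-]] := prime_of_index j_gt0 le_jp; exists q.
Qed.

Lemma coprime_lt_pdiv q n : prime q -> q < pdiv n -> coprime q n.
Proof.
move=> q_pr lt_q_pdiv; rewrite prime_coprime //; apply/negP => /(pdiv_min_dvd (prime_gt1 q_pr)).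
by rewrite leqNgt lt_q_pdiv.
Qed.

Lemma coprime_pdiv_neq k n : 1 < n -> coprime k n -> pdiv k != pdiv n.
Proof.
move=> n_gt1 co_kn; apply/eqP => eq_pdiv.
have : pdiv n %| gcdn k n by rewrite dvdn_gcd -{1}eq_pdiv !pdiv_dvd.
by rewrite (eqP co_kn) dvdn1 => /eqP pdiv1; move: (pdiv_prime n_gt1); rewrite pdiv1.
Qed.

Section InductionStep.

Variable n : nat.
Hypothesis n_gt1 : 1 < n.
Hypothesis IH : forall k, 1 < k -> k < n -> SG k = prime_index (pdiv k).

Lemma SG_moves_below i : i < prime_index (pdiv n) -> i \in [seq SG k | k <- moves n].
Proof.
move=> lt_i_idx; apply/mapP.
have [-> | i_gt0] := posnP i; first by exists 1; rewrite ?mem_moves ?coprime1n //; lia.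
have [q [q_pr lt_q_pdiv <-]] := prime_below_of_index (pdiv_prime n_gt1) i_gt0 lt_i_idx.
have q_gt1 := prime_gt1 q_pr; have le_pdiv_n := pdiv_leq (ltnW n_gt1).
exists q; last by rewrite IH ?pdiv_id //; lia.
by rewrite mem_moves coprime_lt_pdiv //; lia.
Qed.

Lemma prime_index_pdiv_notin_SG_moves :
  prime_index (pdiv n) \notin [seq SG k | k <- moves n].
Proof.
apply/mapP => -[k]; rewrite mem_moves => /and3P[k_gt0 lt_kn co_kn].
have [le_k1 | k_gt1] := leqP k 1.
  have -> : k = 1 by lia.
  by move=> idx_eq; have := prime_index_gt0 (pdiv_prime n_gt1); rewrite idx_eq.
rewrite IH // => idx_eq; have := coprime_pdiv_neq n_gt1 co_kn.
by rewrite (prime_index_inj (pdiv_prime n_gt1) (pdiv_prime k_gt1) idx_eq) eqxx.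
Qed.

Lemma SG_pdiv : SG n = prime_index (pdiv n).
Proof.
rewrite SG_mex; last exact: ltnW.
exact: mex_eq SG_moves_below prime_index_pdiv_notin_SG_moves.
Qed.

End InductionStep.

Theorem mainTheorem6 :
  SG 1 = 0 /\ (forall n : nat, 1 < n -> SG n = prime_index (pdiv n)).
Proof.
split=> // n; elim/ltn_ind: n => n IH n_gt1.
by apply: SG_pdiv => // k k_gt1 lt_kn; exact: IH.
Qed.
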